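(* Let $\mathfrak{g}_\alpha$, $-1\le\alpha\le1$, be the eight-dimensional real Lie algebras with basis $\{X_1,\dots,X_8\}$ and nonzero brackets $[X_1,X_2]=2X_2$, $[X_1,X_3]=-2X_3$, $[X_2,X_3]=X_1$, $[X_1,X_4]=X_4$, $[X_1,X_5]=-X_5$, $[X_1,X_6]=X_6$, $[X_1,X_7]=-X_7$, $[X_2,X_5]=X_4$, $[X_2,X_7]=X_6$, $[X_3,X_4]=X_5$, $[X_3,X_6]=X_7$, $[X_4,X_8]=X_4$, $[X_5,X_8]=X_5$, $[X_6,X_8]=\alpha X_6$, $[X_7,X_8]=\alpha X_7$. Then every $\mathfrak{g}_\alpha$ ($-1\le\alpha\le 1$) can be obtained as a linear deformation of $\mathfrak{g}_{-1}$. Moreover, no algebra $\mathfrak{g}_\alpha$ with $-1\le\alpha\le1$ contracts nontrivially onto $\mathfrak{g}_{-1}$.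
   Context: A linear deformation of a Lie algebra $\mathfrak{g}$ with bracket $[\cdot,\cdot]$ is a Lie algebra structure on the same vector space of the form $[X,Y]_t=[X,Y]+t\,\varphi(X,Y)$, where $t$ is a scalar and $\varphi$ is a skew-symmetric bilinear map which is a 2-cocycle of $\mathfrak{g}$ with values in the adjoint module and satisfies the integrability condition $\sum_{\sigma\in S_3}\varphi(X_{\sigma(i)},\varphi(X_{\sigma(j)},X_{\sigma(k)}))=0$, so that $[\cdot,\cdot]_t$ satisfies the Jacobi identity. Contraction: given a Lie algebra $\mathfrak{g}$ and invertible linear maps $\Phi_t$, $t\in[1,\infty)$, if $[X,Y]_\infty:=\lim_{t\to\infty}\Phi_t^{-1}[\Phi_t(X),\Phi_t(Y)]$ exists for all $X,Y$, it defines a Lie algebra $\mathfrak{g}'$, a contraction of $\mathfrak{g}$; it is nontrivial if $\mathfrak{g}'\not\cong\mathfrak{g}$. The algebras $\mathfrak{g}_\alpha$, $-1\le\alpha\le1$, are pairwise non-isomorphic. *)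

From HB Require Import structures.
From mathcomp Require Import all_boot all_order all_algebra.
From mathcomp Require Import all_classical all_reals all_analysis.
Set Implicit Arguments. Unset Strict Implicit. Unset Printing Implicit Defensive.
Import Order.TTheory GRing.Theory Num.Theory.
Import numFieldNormedType.Exports.
Local Open Scope classical_set_scope.
Local Open Scope ring_scope.

(* The underlying real vector space R^8, as row vectors; coordinate k (0-based)
   corresponds to the basis vector X_(k+1). *)
Definition V8 (R : realType) := 'rV[R]_8.

Definition bracket (R : realType) := V8 R -> V8 R -> V8 R.

Definition bilinear8 (R : realType) (b : bracket R) : Prop :=
  (forall a x y z, b (a *: x + y) z = a *: b x z + b y z) /\
  (forall a x y z, b x (a *: y + z) = a *: b x y + b x z).

Definition skew8 (R : realType) (b : bracket R) : Prop :=
  forall x y, b x y = - b y x.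

Definition jacobi8 (R : realType) (b : bracket R) : Prop :=
  forall x y z, b x (b y z) + b y (b z x) + b z (b x y) = 0.

Definition is_lie8 (R : realType) (b : bracket R) : Prop :=
  bilinear8 b /\ (forall x, b x x = 0) /\ jacobi8 b.

Definition lie_iso8 (R : realType) (b1 b2 : bracket R) : Prop :=
  exists A : 'M[R]_8, A \in unitmx /\
    forall x y, b1 x y *m A = b2 (x *m A) (y *m A).

Definition ev (R : realType) (k : nat) : V8 R := delta_mx 0 (inord k).

(* [X_(i+1), X_(j+1)] for i < j (0-based indices) in g_alpha *)
Definition gup (R : realType) (a : R) (i j : nat) : V8 R :=
  match i, j with
  | 0, 1 => 2 *: ev R 1
  | 0, 2 => - 2 *: ev R 2
  | 1, 2 => ev R 0
  | 0, 3 => ev R 3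
  | 0, 4 => - ev R 4
  | 0, 5 => ev R 5
  | 0, 6 => - ev R 6
  | 1, 4 => ev R 3
  | 1, 6 => ev R 5
  | 2, 3 => ev R 4
  | 2, 5 => ev R 6
  | 3, 7 => ev R 3
  | 4, 7 => ev R 4
  | 5, 7 => a *: ev R 5
  | 6, 7 => a *: ev R 6
  | _, _ => 0
  end.

Definition gcst (R : realType) (a : R) (i j : 'I_8) : V8 R :=
  if (i < j)%N then gup a i j
  else if (j < i)%N then - gup a j i else 0.

Definition gbr (R : realType) (a : R) : bracket R :=
  fun x y => \sum_(i < 8) \sum_(j < 8) (x 0 i * y 0 j) *: gcst a i j.

Definition cocycle8 (R : realType) (b phi : bracket R) : Prop :=
  forall x y z,
    b x (phi y z) + b y (phi z x) + b z (phi x y)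
    - phi (b x y) z - phi (b y z) x - phi (b z x) y = 0.

Definition deform (R : realType) (b phi : bracket R) (t : R) : bracket R :=
  fun x y => b x y + t *: phi x y.

Definition linear_deformation_of (R : realType) (b1 b2 : bracket R) : Prop :=
  exists phi : bracket R,
    bilinear8 phi /\ skew8 phi /\ cocycle8 b1 phi /\ jacobi8 phi /\
    exists t : R, lie_iso8 (deform b1 phi t) b2.

Definition transported (R : realType) (b : bracket R) (P : 'M[R]_8) : bracket R :=
  fun x y => b (x *m P) (y *m P) *m invmx P.

Definition contraction_limit (R : realType) (b : bracket R)
    (Phi : R -> 'M[R]_8) (L : bracket R) : Prop :=
  (forall t : R, 1 <= t -> Phi t \in unitmx) /\
  forall x y (k : 'I_8),
    (fun t : R => transported b (Phi t) x y 0 k) @ +oo --> L x y 0 k.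

From mathcomp Require Import all_boot all_order all_algebra.
From mathcomp Require Import all_classical all_reals all_analysis.
From mathcomp Require Import ring.
Import Order.TTheory GRing.Theory Num.Theory.
Import numFieldNormedType.Exports.
Local Open Scope classical_set_scope.
Local Open Scope ring_scope.
Set Implicit Arguments. Unset Strict Implicit.

(* The parameter enters the brackets of g_alpha affinely:
   [x,y]_alpha = [x,y]_{-1} + (alpha + 1) phi(x,y), where phi(x,y) = y_8 pi(x) - x_8 pi(y)
   and pi is the projection onto span(X6, X7). Since y_8 vanishes on the image of pi,
   phi satisfies the Jacobi identity, and the cocycle identity is a direct computation.

   For the second claim, let K be the Killing form and T(x) = tr ad x. The symmetric form
   Q(x,y) = 2(1+alpha)^2 K(x,y) - (1+alpha^2) T(x) T(y) is transported by isomorphisms and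
   depends polynomially, hence continuously, on the structure constants. On g_alpha it
   has rank 3 (X8 lies in its radical), while on g_{-1} it has rank 4 unless alpha = -1.
   Along a contraction all 4x4 Gram determinants of Q vanish, hence so do those of the
   limit, which therefore cannot be isomorphic to g_{-1}. *)

Section AdjointForms.
Variables (R : comUnitRingType) (n : nat).
Implicit Types (b : 'rV[R]_n -> 'rV[R]_n -> 'rV[R]_n) (x y : 'rV[R]_n) (P : 'M[R]_n).

Definition ad_mx b x : 'M[R]_n := lin1_mx (b x).
Definition killing b x y : R := \tr (ad_mx b x *m ad_mx b y).
Definition ad_trace b x : R := \tr (ad_mx b x).

Local Notation conj_bracket b P := (fun u v => b (u *m P) (v *m P) *m invmx P).

Lemma killing_entries b x y :
  killing b x y = \sum_i \sum_j b x 'e_i 0 j * b y 'e_j 0 i.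
Proof. by apply: eq_bigr => i _; rewrite mxE; apply: eq_bigr => j _; rewrite !mxE. Qed.

Lemma ad_traceE b x : ad_trace b x = \sum_k b x 'e_k 0 k.
Proof. by rewrite /ad_trace /mxtrace; apply: eq_bigr => k _; rewrite mxE. Qed.

Lemma mxtrace_conj P (M : 'M[R]_n) : P \in unitmx -> \tr (P *m M *m invmx P) = \tr M.
Proof. by move=> uP; rewrite mxtrace_mulC mulmxA mulVmx // mul1mx. Qed.

Section LinearBracket.
Variable b : 'rV[R]_n -> 'rV[R]_n -> 'rV[R]_n.
Hypothesis b_linear : forall x, linear (b x).

Lemma ad_mxE x v : b x v = v *m ad_mx b x.
Proof.
rewrite {1}[v]row_sum_delta mulmx_sum_row.
apply: (big_rec2 (fun u w => b x u = w)) => [|i u w _ IH].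
  by have := b_linear x (-1) 0 0; rewrite scaler0 addr0 scaleN1r addNr.
rewrite b_linear IH; congr (_ *: _ + _).
by apply/rowP => j; rewrite !mxE.
Qed.

Lemma killingE x y : killing b x y = \sum_k b x (b y 'e_k) 0 k.
Proof.
rewrite /killing mxtrace_mulC /mxtrace; apply: eq_bigr => k _.
by rewrite (ad_mxE y) (ad_mxE x) -mulmxA -rowE [RHS]mxE.
Qed.

Lemma ad_mx_conj P x : P \in unitmx ->
  ad_mx (conj_bracket b P) x = P *m ad_mx b (x *m P) *m invmx P.
Proof.
move=> uP; apply/matrixP => i j.
by rewrite [LHS]mxE ad_mxE -!mulmxA -rowE [LHS]mxE.
Qed.

Lemma killing_conj P x y : P \in unitmx ->
  killing (conj_bracket b P) x y = killing b (x *m P) (y *m P).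
Proof.
move=> uP; rewrite /killing !ad_mx_conj //.
by rewrite -!mulmxA mulKmx // mxtrace_mulC -!mulmxA mulVmx // mulmx1.
Qed.

Lemma ad_trace_conj P x : P \in unitmx ->
  ad_trace (conj_bracket b P) x = ad_trace b (x *m P).
Proof. by move=> uP; rewrite /ad_trace ad_mx_conj // mxtrace_conj. Qed.

End LinearBracket.
End AdjointForms.

Section Continuity.
Context {R : realType} {T : Type} {F : set_system T} {FF : Filter F}.

Lemma cvg_det n (M : T -> 'M[R]_n) (M0 : 'M[R]_n) :
  (forall i j, M t i j @[t --> F] --> M0 i j) -> \det (M t) @[t --> F] --> \det M0.
Proof.
move=> MM; apply: cvg_big => [|s _]; first exact: add_continuous.
apply: cvgM; first exact: cvg_cst.
by apply: cvg_big => [|i _]; [exact: mul_continuous | exact: MM].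
Qed.

Variables (n : nat) (b : T -> 'rV[R]_n -> 'rV[R]_n -> 'rV[R]_n).
Variable L : 'rV[R]_n -> 'rV[R]_n -> 'rV[R]_n.
Hypothesis cvg_b : forall x y k, b t x y 0 k @[t --> F] --> L x y 0 k.

Lemma cvg_ad_trace x : ad_trace (b t) x @[t --> F] --> ad_trace L x.
Proof.
rewrite ad_traceE; under eq_cvg do rewrite ad_traceE.
by apply: cvg_big => [|k _]; [exact: add_continuous | exact: cvg_b].
Qed.

Lemma cvg_killing x y : killing (b t) x y @[t --> F] --> killing L x y.
Proof.
rewrite killing_entries; under eq_cvg do rewrite killing_entries.
apply: cvg_big => [|i _]; first exact: add_continuous.
by apply: cvg_big => [|j _]; [exact: add_continuous | apply: cvgM; exact: cvg_b].
Qed.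

End Continuity.

Section GramDeterminant.
Variables (R : fieldType) (V : Type).

Definition gram m (B : V -> V -> R) (v : 'I_m -> V) : 'M[R]_m :=
  \matrix_(i, j) B (v i) (v j).

Lemma det_mulmx_lt m k (A : 'M[R]_(m, k)) (C : 'M[R]_(k, m)) :
  (k < m)%N -> \det (A *m C) = 0.
Proof.
move=> km; apply/eqP; apply: contraTT km => detAC.
have : A *m C \in unitmx by rewrite unitmxE unitfE.
rewrite -row_free_unit => /eqP rkAC; rewrite -leqNgt -{1}rkAC.
exact: leq_trans (mxrankM_maxl A C) (rank_leq_col A).
Qed.

Lemma det_gram_lowrank m k (B : V -> V -> R) (f g : 'I_k -> V -> R) (v : 'I_m -> V) :
  (k < m)%N -> (forall x y, B x y = \sum_p f p x * g p y) -> \det (gram B v) = 0.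
Proof.
move=> km BE.
rewrite -(det_mulmx_lt (\matrix_(i, p) f p (v i)) (\matrix_(p, j) g p (v j)) km).
by congr (\det _); apply/matrixP => i j; rewrite !mxE BE; apply: eq_bigr => p _; rewrite !mxE.
Qed.

End GramDeterminant.

Section Coordinates.
Variable R : realType.
Implicit Types (a : R) (x y v w : V8 R).

(* [inord] sends indices >= 8 to 0, hence the side conditions [k < 8] below. *)
Definition crd x (i : nat) : R := x 0 (inord i).

Definition gbr_coord a x y (k : nat) : R :=
  match k with
  | 0%N => crd x 1 * crd y 2 - crd x 2 * crd y 1
  | 1%N => 2 * (crd x 0 * crd y 1) - 2 * (crd x 1 * crd y 0)
  | 2%N => - 2 * (crd x 0 * crd y 2) + 2 * (crd x 2 * crd y 0)
  | 3%N => crd x 0 * crd y 3 + crd x 1 * crd y 4 - crd x 3 * crd y 0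
         + crd x 3 * crd y 7 - crd x 4 * crd y 1 - crd x 7 * crd y 3
  | 4%N => - (crd x 0 * crd y 4) + crd x 2 * crd y 3 - crd x 3 * crd y 2
         + crd x 4 * crd y 0 + crd x 4 * crd y 7 - crd x 7 * crd y 4
  | 5%N => a * (crd x 5 * crd y 7) - a * (crd x 7 * crd y 5) + crd x 0 * crd y 5
         + crd x 1 * crd y 6 - crd x 5 * crd y 0 - crd x 6 * crd y 1
  | 6%N => a * (crd x 6 * crd y 7) - a * (crd x 7 * crd y 6) - crd x 0 * crd y 6
         + crd x 2 * crd y 5 - crd x 5 * crd y 2 + crd x 6 * crd y 0
  | _ => 0
  end.

Lemma inord_eq8 i j : (i < 8)%N -> (j < 8)%N -> (inord i == inord j :> 'I_8) = (i == j).
Proof. by move=> lti ltj; rewrite -val_eqE /= !inordK. Qed.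

Lemma sum_iota8 (F : nat -> R) : \sum_(0 <= i < 8) F i =
  F 0%N + F 1%N + F 2%N + F 3%N + F 4%N + F 5%N + F 6%N + F 7%N.
Proof. by rewrite /index_iota /= !big_cons big_nil addr0 !addrA. Qed.

Lemma crdP x y : (forall k, (k < 8)%N -> crd x k = crd y k) -> x = y.
Proof. by move=> xy; apply/rowP => k; rewrite -(inord_val k); exact: xy. Qed.

Lemma crdD x y k : crd (x + y) k = crd x k + crd y k. Proof. exact: mxE. Qed.
Lemma crdN x k : crd (- x) k = - crd x k. Proof. exact: mxE. Qed.
Lemma crdZ c x k : crd (c *: x) k = c * crd x k. Proof. exact: mxE. Qed.
Lemma crd0 k : crd 0 k = 0. Proof. exact: mxE. Qed.
Definition crdE := (crdD, crdN, crdZ, crd0).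

(* The entries of [gup] as Kronecker deltas, which [simpl] evaluates. *)
Definition gup_coord a (i j k : nat) : R :=
  let e p := (k == p)%:R in
  match i, j with
  | 0%N, 1%N => 2 * e 1%N | 0%N, 2%N => - 2 * e 2%N | 1%N, 2%N => e 0%N
  | 0%N, 3%N => e 3%N | 0%N, 4%N => - e 4%N | 0%N, 5%N => e 5%N | 0%N, 6%N => - e 6%N
  | 1%N, 4%N => e 3%N | 1%N, 6%N => e 5%N | 2%N, 3%N => e 4%N | 2%N, 5%N => e 6%N
  | 3%N, 7%N => e 3%N | 4%N, 7%N => e 4%N | 5%N, 7%N => a * e 5%N | 6%N, 7%N => a * e 6%N
  | _, _ => 0
  end.

Lemma gup_coordE a i j k : (k < 8)%N -> gup a i j 0 (inord k) = gup_coord a i j k.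
Proof.
by move=> ltk8; move: i j => [|[|[|[|[|[|[|[|i]]]]]]]] [|[|[|[|[|[|[|[|j]]]]]]]];
  rewrite /gup /gup_coord ?mxE //= inord_eq8.
Qed.

Definition gcst_coord a (i j k : nat) : R :=
  if (i < j)%N then gup_coord a i j k
  else if (j < i)%N then - gup_coord a j i k else 0.

Lemma gcst_coordE a (i j : 'I_8) k : (k < 8)%N -> crd (gcst a i j) k = gcst_coord a i j k.
Proof.
move=> ltk8; rewrite /crd /gcst /gcst_coord.
case: ifP => _; first exact: gup_coordE.
by case: ifP => _; rewrite mxE ?gup_coordE.
Qed.

Lemma crd_gbr a x y k : (k < 8)%N -> crd (gbr a x y) k = gbr_coord a x y k.
Proof.
move=> ltk8.
have -> : crd (gbr a x y) k =
    \sum_(0 <= i < 8) \sum_(0 <= j < 8) crd x i * crd y j * gcst_coord a i j k.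
  rewrite /crd summxE big_mkord; apply: eq_bigr => i _.
  rewrite summxE big_mkord; apply: eq_bigr => j _.
  by rewrite mxE -gcst_coordE // /crd !inord_val.
rewrite !sum_iota8.
by case: k ltk8 => [|[|[|[|[|[|[|[|k]]]]]]]] //= _; rewrite /gcst_coord /gup_coord /=; ring.
Qed.

Lemma gbr_bilinear a : bilinear8 (gbr a).
Proof.
split=> c x y z; rewrite /gbr scaler_sumr -big_split; apply: eq_bigr => i _;
  rewrite scaler_sumr -big_split; apply: eq_bigr => j _;
  by rewrite !mxE scalerA /= -scalerDl; congr (_ *: _); ring.
Qed.

Lemma gbr_linear a x : linear (gbr a x).
Proof. by move=> c y z; rewrite (gbr_bilinear a).2. Qed.

Lemma crd_delta i p : (i < 8)%N -> (p < 8)%N -> crd 'e_(inord i) p = (i == p)%:R.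
Proof. by move=> lti ltp; rewrite /crd mxE inord_eq8 // eq_sym. Qed.

Lemma killing_gbr a v w : killing (gbr a) v w =
  12 * (crd v 0 * crd w 0) + 6 * (crd v 1 * crd w 2) + 6 * (crd v 2 * crd w 1)
  + 2 * (1 + a ^+ 2) * (crd v 7 * crd w 7).
Proof.
rewrite killingE; last exact: gbr_linear.
pose G k := crd (gbr a v (gbr a w 'e_(inord k))) k.
rewrite (eq_bigr (fun k : 'I_8 => G k)) => [|k _]; last by rewrite /G /crd inord_val.
rewrite -(big_mkord xpredT G) sum_iota8 /G !crd_gbr // /gbr_coord /=.
by rewrite !crd_gbr // /gbr_coord /= !crd_delta //=; ring.
Qed.

Lemma ad_trace_gbr a v : ad_trace (gbr a) v = - 2 * (1 + a) * crd v 7.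
Proof.
pose G k := crd (gbr a v 'e_(inord k)) k.
rewrite ad_traceE (eq_bigr (fun k : 'I_8 => G k)) => [|k _]; last by rewrite /G /crd inord_val.
by rewrite -(big_mkord xpredT G) sum_iota8 /G !crd_gbr // /gbr_coord /= !crd_delta //=; ring.
Qed.

End Coordinates.

Section Deformation.
Variable R : realType.
Implicit Types (x y z : V8 R).

Section WedgeBracket.
Variables (lam : V8 R -> R) (pi : V8 R -> V8 R).
Hypotheses (lamP : scalar lam) (piP : linear pi).
Hypotheses (lam_pi : forall x, lam (pi x) = 0) (pi_idem : forall x, pi (pi x) = pi x).

Definition wedge x y := lam y *: pi x - lam x *: pi y.

Lemma wedge_bilinear : bilinear8 wedge.
Proof. by split=> c x y z; rewrite /wedge !lamP !piP; apply/rowP => k; rewrite !mxE; ring. Qed.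

Lemma wedge_skew : skew8 wedge.
Proof. by move=> x y; rewrite /wedge opprB. Qed.

Lemma wedge_jacobi : jacobi8 wedge.
Proof.
have lamB := zmod_morphism_linear lamP; have lamZ := scalable_linear lamP.
have piB := zmod_morphism_linear piP; have piZ := scalable_linear piP.
move=> x y z; rewrite /wedge !lamB !lamZ !piB !piZ !lam_pi !pi_idem /=.
by apply/rowP => k; rewrite !mxE; ring.
Qed.

End WedgeBracket.

Definition proj67 x : V8 R :=
  \row_(k < 8) if (k == 5 :> nat) || (k == 6 :> nat) then x 0 k else 0.

Lemma proj67_linear : linear proj67.
Proof. by move=> c x y; apply/rowP => k; rewrite !mxE; case: ifP; rewrite ?mulr0 ?addr0. Qed.

Lemma crd7_scalar : scalar (fun x : V8 R => crd x 7).
Proof. by move=> c x y; rewrite /crd !mxE. Qed.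

Lemma crd_proj67 x k : (k < 8)%N ->
  crd (proj67 x) k = if (k == 5) || (k == 6) then crd x k else 0.
Proof. by move=> ltk8; rewrite /crd mxE inordK. Qed.

Lemma crd7_proj67 x : crd (proj67 x) 7 = 0.
Proof. by rewrite crd_proj67. Qed.

Lemma proj67_idem x : proj67 (proj67 x) = proj67 x.
Proof. by apply/rowP => k; rewrite !mxE; case: (_ || _). Qed.

(* phi (X6, X8) = X6, phi (X7, X8) = X7: the derivative in alpha of the bracket of g_alpha. *)
Definition phi : bracket R := wedge (fun x : V8 R => crd x 7) proj67.

Ltac expand_crd := rewrite ?crdE ?crd_gbr ?crd_proj67 //=; try rewrite /gbr_coord /=.

(* Brackets are nested at most twice, so three rounds of expansion reach the coordinates
   of the arguments. *)
Ltac coordinatewise :=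
  apply: crdP; rewrite /phi /wedge /=;
  case=> [|[|[|[|[|[|[|[|k]]]]]]]] // _; do 3 expand_crd; ring.

Lemma phi_cocycle : cocycle8 (gbr (-1)) phi.
Proof. move=> x y z; coordinatewise. Qed.

Lemma deform_gbrN1 (a : R) : deform (gbr (-1)) phi (a + 1) = gbr a.
Proof. apply/funext => x; apply/funext => y; rewrite /deform; coordinatewise. Qed.

Lemma gbr_deformation (a : R) : linear_deformation_of (gbr (-1)) (gbr a).
Proof.
exists phi; split; first exact: wedge_bilinear crd7_scalar proj67_linear.
split; first exact: wedge_skew.
split; first exact: phi_cocycle.
split; first exact: wedge_jacobi crd7_scalar proj67_linear crd7_proj67 proj67_idem.
exists (a + 1), 1%:M; split; first exact: unitmx1.
by move=> x y; rewrite !mulmx1 deform_gbrN1.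
Qed.

End Deformation.

Section Rigidity.
Variable R : realType.
Implicit Types (a : R) (b : bracket R) (x y v w : V8 R) (P : 'M[R]_8).

(* The weights put X8 in the radical on g_alpha: 2 (1+a)^2 K(X8,X8) = (1+a^2) T(X8)^2. *)
Definition killing_trace_form a b x y : R :=
  2 * (1 + a) ^+ 2 * killing b x y - (1 + a ^+ 2) * (ad_trace b x * ad_trace b y).

Lemma killing_trace_form_transported a b P x y :
  (forall z, linear (b z)) -> P \in unitmx ->
  killing_trace_form a (transported b P) x y = killing_trace_form a b (x *m P) (y *m P).
Proof. by move=> bP uP; rewrite /killing_trace_form killing_conj // !ad_trace_conj. Qed.

Lemma gram_transported a b P m (v : 'I_m -> V8 R) :
  (forall z, linear (b z)) -> P \in unitmx ->
  gram (killing_trace_form a (transported b P)) v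
  = gram (killing_trace_form a b) (fun i => v i *m P).
Proof.
by move=> bP uP; apply/matrixP => i j; rewrite !mxE killing_trace_form_transported.
Qed.

Lemma killing_trace_form_gbr a v w : killing_trace_form a (gbr a) v w =
  2 * (1 + a) ^+ 2 * (12 * (crd v 0 * crd w 0) + 6 * (crd v 1 * crd w 2)
                      + 6 * (crd v 2 * crd w 1)).
Proof. by rewrite /killing_trace_form killing_gbr !ad_trace_gbr; ring. Qed.

Lemma killing_trace_form_gbrN1 a v w : killing_trace_form a (gbr (-1)) v w =
  2 * (1 + a) ^+ 2 * (12 * (crd v 0 * crd w 0) + 6 * (crd v 1 * crd w 2)
                      + 6 * (crd v 2 * crd w 1) + 4 * (crd v 7 * crd w 7)).
Proof. by rewrite /killing_trace_form killing_gbr !ad_trace_gbr; ring. Qed.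

Lemma det_gram_gbr a (v : 'I_4 -> V8 R) :
  \det (gram (killing_trace_form a (gbr a)) v) = 0.
Proof.
pose g (p : 'I_3) y := 2 * (1 + a) ^+ 2 *
  (if p == 0 :> nat then 12 * crd y 0 else if p == 1 :> nat then 6 * crd y 2 else 6 * crd y 1).
apply: (det_gram_lowrank (f := fun p x => crd x p) (g := g)) => // x y.
by rewrite killing_trace_form_gbr !big_ord_recl big_ord0 /g /=; ring.
Qed.

Definition diag_basis (i : 'I_4) : V8 R :=
  match val i with
  | 0%N => ev R 0
  | 1%N => ev R 1 + ev R 2
  | 2%N => ev R 1 - ev R 2
  | _ => ev R 7
  end.

Lemma det_gram_gbrN1 a : a != -1 ->
  \det (gram (killing_trace_form a (gbr (-1))) diag_basis) != 0.
Proof.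
move=> aN1; pose c := 2 * (1 + a) ^+ 2.
have c_neq0 : c != 0 by rewrite mulf_neq0 // expf_neq0 // addrC addr_eq0.
pose d (i : 'I_4) : R := match val i with 0%N => 12 | 1%N => 12 | 2%N => -12 | _ => 4 end.
have -> : gram (killing_trace_form a (gbr (-1))) diag_basis = diag_mx (\row_i (c * d i)).
  apply/matrixP => -[[|[|[|[|i]]]] lti] [[|[|[|[|j]]]] ltj] //;
    rewrite !mxE killing_trace_form_gbrN1 /diag_basis /ev /= ?crdE !crd_delta //=;
    rewrite /c /d /= ?mulr1n ?mulr0n; ring.
rewrite det_diag; apply/prodf_neq0 => i _; rewrite mxE mulf_neq0 //.
by rewrite /d; case: i => [[|[|[|[|i]]]] lti] //=; rewrite ?oppr_eq0 pnatr_eq0.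
Qed.

Lemma cvg_det_gram_contraction a b Phi L m (v : 'I_m -> V8 R) :
  contraction_limit b Phi L ->
  \det (gram (killing_trace_form a (transported b (Phi t))) v) @[t --> +oo]
  --> \det (gram (killing_trace_form a L) v).
Proof.
move=> [_ cvg_b]; apply: cvg_det => i j; rewrite mxE; under eq_cvg do rewrite mxE.
apply: cvgB; apply: cvgM; try exact: cvg_cst.
- exact: cvg_killing.
- by apply: cvgM; exact: cvg_ad_trace.
Qed.

Lemma lie_iso8_transported b1 b2 A : A \in unitmx ->
  (forall x y, b1 x y *m A = b2 (x *m A) (y *m A)) -> b1 = transported b2 A.
Proof.
by move=> uA iso; apply/funext => x; apply/funext => y; rewrite /transported -iso mulmxK.
Qed.

Lemma contraction_onto_gbrN1 a Phi L :
  contraction_limit (gbr a) Phi L -> lie_iso8 L (gbr (-1)) -> a = -1.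
Proof.
move=> contr [A [uA isoA]]; apply/eqP; apply: contraTT (@det_gram_gbrN1 a) _.
pose u i := diag_basis i *m invmx A.
have gram_L : gram (killing_trace_form a L) u
              = gram (killing_trace_form a (gbr (-1))) diag_basis.
  rewrite (lie_iso8_transported uA isoA) gram_transported //; last exact: gbr_linear.
  by congr gram; apply/funext => i; rewrite mulmxKV.
have gram_t : \forall t \near +oo,
    \det (gram (killing_trace_form a (transported (gbr a) (Phi t))) u) = 0.
  apply: filterS (nbhs_pinfty_ge (num_real 1)) => t /contr.1 uPt.
  by rewrite gram_transported ?det_gram_gbr //; exact: gbr_linear.
apply/eqP; rewrite -gram_L.
exact: (@cvg_unique _ (@Rhausdorff R) _ _ _ _
  (cvg_det_gram_contraction contr) (cvg_near_cst 0 gram_t)).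
Qed.

End Rigidity.

Theorem corollary1 (R : realType) :
  (forall a : R, -1 <= a <= 1 -> linear_deformation_of (gbr (-1)) (gbr a)) /\
  (forall a : R, -1 <= a <= 1 ->
     forall (Phi : R -> 'M[R]_8) (L : bracket R),
       contraction_limit (gbr a) Phi L ->
       lie_iso8 L (gbr (-1)) -> lie_iso8 L (gbr a)).
Proof.
split=> a _; first exact: gbr_deformation.
by move=> Phi L contr isoL; rewrite (contraction_onto_gbrN1 contr isoL).
Qed.
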